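(* Let $k\ge2$ and $n\ge3$. If $k$ is even, then $\mathcal{F}_{n,k}(x)$ has no nonzero real roots. If $k$ is odd, then $\mathcal{F}_{n,k}(x)$ has no positive real roots.
   Context: For $k\ge2$ and $n\ge1$, the polynomials $\mathcal{F}_{n,k}(x)$ are defined by $\mathcal{F}_{1,k}=1$, $\mathcal{F}_{n,k}=0$ for $n=0,-1,\dots,-(k-2)$, and $\mathcal{F}_{n,k}(x)=x^{k-1}\mathcal{F}_{n-1,k}(x)+x^{k-2}\mathcal{F}_{n-2,k}(x)+\dots+\mathcal{F}_{n-k,k}(x)$ for $n\ge2$. *)

From mathcomp Require Import all_boot all_order all_algebra.
Set Implicit Arguments. Unset Strict Implicit. Unset Printing Implicit Defensive.
Import GRing.Theory Num.Theory.
Local Open Scope ring_scope.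

(* Shifted index: Gseq R k j = F_{j - (k-2), k} for j : nat, so that the
   initial values F_{0},...,F_{-(k-2)} = 0 correspond to j = 0..k-2, and
   F_1 = 1 corresponds to j = k-1.
   Gseq R k j is computed as the list [G_j; G_{j-1}; ...; G_0]. *)
Fixpoint Glist (R : nzRingType) (k : nat) (j : nat) : seq {poly R} :=
  match j with
  | 0 => [:: (if k == 1%N then 1 else 0)]
  | j'.+1 =>
      let prev := Glist R k j' in
      let gj :=
        if (j < k.-1)%N then 0
        else if j == k.-1 then 1
        else \sum_(i < k) 'X^(k.-1 - i) * nth 0 prev i in
      gj :: prev
  end.

Definition Gseq (R : nzRingType) (k j : nat) : {poly R} := head 0 (Glist R k j).

Definition Fpoly (R : nzRingType) (n k : nat) : {poly R} := Gseq R k (n + (k - 2)).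

From mathcomp Require Import all_boot all_order all_algebra.
From mathcomp Require Import reals.
From mathcomp Require Import zify.
Import Order.TTheory GRing.Theory Num.Theory.
Local Open Scope ring_scope.

(* For x > 0 the recursion only adds products of nonnegative terms, and its
   first summand x^(k-1) F_{n-1,k}(x) is already positive, so F_{n,k}(x) > 0.
   For even k every monomial of F_{n,k} has degree of the parity of n - 1
   (the recursion raises the degree by k - 1 - i while the index drops by
   i + 1, and these sum to k), hence
   F_{n,k}(-x) = +-F_{n,k}(x) and negative roots are excluded as well. *)

Lemma nth_Glist (R : nzRingType) (k j i : nat) : (i <= j)%N ->
  nth 0 (Glist R k j) i = Gseq R k (j - i).
Proof.
elim: j i => [|j IHj] [|i] //= le_ij.
by rewrite IHj // subSS.
Qed.

Lemma GseqE (R : nzRingType) (k j : nat) : (0 < k)%N ->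
  Gseq R k j =
  if (j < k.-1)%N then 0 else if j == k.-1 then 1
  else \sum_(i < k) 'X^(k.-1 - i) * Gseq R k (j.-1 - i).
Proof.
move=> k_gt0; case: j => [|j] /=.
  by rewrite /Gseq /=; case: k k_gt0 => [|[|k]].
rewrite /Gseq /=; case: ifP => // lt_jk; case: ifP => // ne_jk.
apply: eq_bigr => i _; congr (_ * _); apply: nth_Glist.
by move/negbT: lt_jk; move/negbT: ne_jk; have := ltn_ord i; lia.
Qed.

Section Positivity.
Variables (R : realDomainType) (k : nat) (x : R).
Hypotheses (k_gt0 : (0 < k)%N) (x_gt0 : 0 < x).

Lemma horner_Gseq_ge0 (j : nat) : 0 <= (Gseq R k j).[x].
Proof.
elim/ltn_ind: j => j IHj; rewrite GseqE //.
case: ifP => [_|lt_jk]; first by rewrite horner0.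
case: ifP => [_|ne_jk]; first by rewrite hornerC.
rewrite horner_sum; apply: sumr_ge0 => i _.
rewrite hornerM hornerXn; apply: mulr_ge0; first exact/exprn_ge0/ltW.
apply: IHj.
by move/negbT: lt_jk; move/negbT: ne_jk; lia.
Qed.

Lemma horner_Gseq_gt0 (j : nat) : (k.-1 <= j)%N -> 0 < (Gseq R k j).[x].
Proof.
elim/ltn_ind: j => j IHj le_kj; rewrite GseqE // ltnNge le_kj /=.
case: ifP => [_|ne_jk]; first by rewrite hornerC ltr01.
rewrite horner_sum (bigD1 (Ordinal k_gt0)) //=.
have lead_gt0 : 0 < ('X^(k.-1 - 0) * Gseq R k (j.-1 - 0)).[x].
  rewrite hornerM hornerXn mulr_gt0 ?exprn_gt0 //; apply: IHj;
    by move/negbT: ne_jk; lia.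
apply: (lt_le_trans lead_gt0); rewrite lerDl.
apply: sumr_ge0 => i _; rewrite hornerM hornerXn.
by apply: mulr_ge0; [exact/exprn_ge0/ltW | exact: horner_Gseq_ge0].
Qed.

End Positivity.

Lemma odd_Gseq_degree (k j i : nat) : ~~ odd k -> (i < k)%N -> (k.-1 < j)%N ->
  odd (k.-1 - i + (j.-1 - i).+1) = odd j.+1.
Proof.
move=> even_k lt_ik lt_kj.
have [m def_k] : exists m, k = m.*2.
  by exists k./2; rewrite -{1}(odd_double_half k) (negbTE even_k).
have deg_eq : (k.-1 - i + (j.-1 - i).+1 + i.*2 = j.+1 + m.-1.*2)%N by lia.
by move/(congr1 odd): deg_eq; rewrite !oddD !odd_double !addbF.
Qed.

Lemma horner_Gseq_N (R : comNzRingType) (k j : nat) (x : R) :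
  (0 < k)%N -> ~~ odd k ->
  (Gseq R k j).[- x] = (-1) ^+ j.+1 * (Gseq R k j).[x].
Proof.
move=> k_gt0 even_k; elim/ltn_ind: j => j IHj; rewrite GseqE //.
case: ifP => [_|lt_jk]; first by rewrite !horner0 mulr0.
case: ifP => [/eqP ->|ne_jk].
  by rewrite !hornerC mulr1 prednK // -signr_odd (negbTE even_k).
have lt_kj : (k.-1 < j)%N by move/negbT: lt_jk; move/negbT: ne_jk; lia.
rewrite !horner_sum mulr_sumr; apply: eq_bigr => i _.
rewrite !hornerM !hornerXn IHj; last by lia.
rewrite (exprNn x) mulrACA -exprD -[(-1) ^+ (_ + _)]signr_odd.
by rewrite odd_Gseq_degree // signr_odd.
Qed.

Theorem mainTheorem15 (R : realType) (k n : nat) :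
  (2 <= k)%N -> (3 <= n)%N ->
  (~~ odd k -> forall x : R, x != 0 -> ~~ root (Fpoly R n k) x) /\
  (odd k -> forall x : R, 0 < x -> ~~ root (Fpoly R n k) x).
Proof.
move=> k_ge2 n_ge3; have k_gt0 : (0 < k)%N by lia.
have Fpoly_gt0 (x : R) : 0 < x -> 0 < (Fpoly R n k).[x].
  by move=> x_gt0; apply: horner_Gseq_gt0 => //; lia.
split=> [even_k x x_neq0 | _ x x_gt0]; rewrite /root; last first.
  exact/lt0r_neq0/Fpoly_gt0.
have [x_lt0|x_gt0|x_eq0] := ltrgtP x 0; last by rewrite x_eq0 eqxx in x_neq0.
  have := Fpoly_gt0 (- x); rewrite oppr_gt0 => /(_ x_lt0) /lt0r_neq0.
  by rewrite /Fpoly horner_Gseq_N // mulf_eq0 negb_or => /andP[].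
exact/lt0r_neq0/Fpoly_gt0.
Qed.
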